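(* Let $n\ge 1$, let $\mathbf{w}\in\mathbb{R}^n$ and $\mathbf{v}=(v_1,\dots,v_n)\in\mathbb{R}^n$ with $v_e>0$ for all $e$, and let $V_c>0$. Define the canonical measure $\Lambda:\mathbb{R}^n\to\mathbb{R}^{n+1}$, $\Lambda(\boldsymbol{\rho})=(\boldsymbol{\rho}\circ\boldsymbol{\rho}-\boldsymbol{\rho},\ \boldsymbol{\rho}^T\mathbf{v}-V_c)$. Let $\mathcal{E}_a=\{(\boldsymbol{\epsilon},\nu)\in\mathbb{R}^{n+1}:\boldsymbol{\epsilon}\le 0,\ \nu\le 0\}$ and let $\Psi$ be its indicator function ($\Psi=0$ on $\mathcal{E}_a$, $+\infty$ elsewhere). Let $\mathcal{E}_a^*=\{\boldsymbol{\zeta}=(\boldsymbol{\sigma},\tau)\in\mathbb{R}^{n+1}:\boldsymbol{\sigma}\ge 0,\ \tau\ge 0\}$ and let $\Psi^*$ be its indicator function (which is the Fenchel conjugate of $\Psi$). Define $$\Pi_u(\boldsymbol{\rho})=\Psi(\Lambda(\boldsymbol{\rho}))-\mathbf{w}^T\boldsymbol{\rho},\qquad \Xi(\boldsymbol{\rho},\boldsymbol{\zeta})=\Lambda(\boldsymbol{\rho})^T\boldsymbol{\zeta}-\mathbf{w}^T\boldsymbol{\rho}-\Psi^*(\boldsymbol{\zeta}),$$ and, for $\boldsymbol{\zeta}=(\boldsymbol{\sigma},\tau)$ with all $\sigma_e\neq 0$, $$\Pi_u^d(\boldsymbol{\zeta})=P_u^d(\boldsymbol{\zeta})-\Psi^*(\boldsymbol{\zeta}),\qquad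 P_u^d(\boldsymbol{\sigma},\tau)=-\sum_{e=1}^n\frac{(\sigma_e+w_e-\tau v_e)^2}{4\sigma_e}-\tau V_c .$$ If $(\bar{\boldsymbol{\rho}},\bar{\boldsymbol{\zeta}})$ is a KKT point of $\Xi$, then $\bar{\boldsymbol{\rho}}$ is a KKT point of $\Pi_u$, $\bar{\boldsymbol{\zeta}}$ is a KKT point of $\Pi_u^d$, and $$\Pi_u(\bar{\boldsymbol{\rho}})=\Xi(\bar{\boldsymbol{\rho}},\bar{\boldsymbol{\zeta}})=\Pi_u^d(\bar{\boldsymbol{\zeta}}).$$
   Context: $\boldsymbol{\rho}\circ\boldsymbol{\rho}=(\rho_e^2)_e$ denotes the Hadamard product; vector inequalities are componentwise. In the paper $\mathbf{w}=\mathbf{c}(\mathbf{u})$ is the vector of element energies for a given displacement $\mathbf{u}$, and $\Pi_u$ is the unconstrained reformulation of the knapsack problem $\min\{-\mathbf{w}^T\boldsymbol{\rho}:\mathbf{v}^T\boldsymbol{\rho}\le V_c,\ \boldsymbol{\rho}\in\{0,1\}^n\}$. ''KKT point'' refers to the Karush–Kuhn–Tucker conditions for the inequality constraints $\boldsymbol{\rho}\circ\boldsymbol{\rho}-\boldsymbol{\rho}\le 0$ and $\mathbf{v}^T\boldsymbol{\rho}-V_c\le 0$ with multipliers $\boldsymbol{\sigma}$ and $\tau$ respectively, i.e. stationarity together with $\boldsymbol{\sigma}\ge 0$, $\boldsymbol{\sigma}^T(\boldsymbol{\rho}\circ\boldsymbol{\rho}-\boldsymbol{\rho})=0$, $\tau\ge0$,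 $\tau(\mathbf{v}^T\boldsymbol{\rho}-V_c)=0$ and primal feasibility. *)

From HB Require Import structures.
From mathcomp Require Import all_boot all_order all_algebra.
From mathcomp Require Import all_classical all_reals all_analysis.
Set Implicit Arguments. Unset Strict Implicit. Unset Printing Implicit Defensive.
Import Order.TTheory GRing.Theory Num.Theory.
Import numFieldNormedType.Exports.
Local Open Scope ring_scope.

Section Canonical.
Variables (R : realType) (n : nat).
Implicit Types (rho w v sigma : 'I_n -> R) (Vc tau : R).

Definition upd (x : 'I_n -> R) (i : 'I_n) (s : R) : 'I_n -> R :=
  fun j => x j + (if j == i then s else 0).

Definition has_partial (f : ('I_n -> R) -> R) (x : 'I_n -> R) (i : 'I_n) (d : R) : Prop :=
  is_derive (0 : R) (1 : R) (fun s : R => f (upd x i s)) d.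

Definition Lam_eps rho : 'I_n -> R := fun e => rho e ^+ 2 - rho e.
Definition Lam_nu v Vc rho : R := \sum_(e < n) rho e * v e - Vc.

Definition Psi (eps : 'I_n -> R) (nu : R) : \bar R :=
  if `[< (forall e, eps e <= 0) /\ nu <= 0 >] then 0%E else +oo%E.

Definition Psi_star sigma tau : \bar R :=
  if `[< (forall e, 0 <= sigma e) /\ 0 <= tau >] then 0%E else +oo%E.

Definition dotw w rho : R := \sum_(e < n) w e * rho e.

Definition Pi_u w v Vc rho : \bar R :=
  (Psi (Lam_eps rho) (Lam_nu v Vc rho) - (dotw w rho)%:E)%E.

Definition Lagr w v Vc sigma tau rho : R :=
  \sum_(e < n) Lam_eps rho e * sigma e + Lam_nu v Vc rho * tau - dotw w rho.

Definition Xi w v Vc rho sigma tau : \bar R :=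
  ((Lagr w v Vc sigma tau rho)%:E - Psi_star sigma tau)%E.

Definition Pud w v Vc sigma tau : R :=
  - (\sum_(e < n) (sigma e + w e - tau * v e) ^+ 2 / (4 * sigma e)) - tau * Vc.

(* Pi_u^d = P_u^d - Psi^* (defined for sigma_e <> 0) *)
Definition Pi_ud w v Vc sigma tau : \bar R :=
  ((Pud w v Vc sigma tau)%:E - Psi_star sigma tau)%E.

(* KKT conditions shared by Xi and Pi_u: stationarity in rho of the
   Lagrangian, dual feasibility, complementarity, primal feasibility. *)
Definition KKT_conds w v Vc rho sigma tau : Prop :=
  [/\ forall i, has_partial (Lagr w v Vc sigma tau) rho i 0,
      (forall e, 0 <= sigma e) /\ 0 <= tau,
      \sum_(e < n) sigma e * Lam_eps rho e = 0 /\ tau * Lam_nu v Vc rho = 0 &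
      (forall e, Lam_eps rho e <= 0) /\ Lam_nu v Vc rho <= 0].

Definition KKT_Xi w v Vc rho sigma tau : Prop := KKT_conds w v Vc rho sigma tau.

Definition KKT_Pi_u w v Vc rho : Prop :=
  exists sigma tau, KKT_conds w v Vc rho sigma tau.

(* KKT point of Pi_u^d = P_u^d - Psi^*: KKT point of
   max P_u^d(zeta) s.t. -zeta <= 0, with multipliers (mu, kappa):
   grad P_u^d(zeta) = -(mu, kappa), mu, kappa >= 0, complementarity,
   zeta >= 0; and zeta in the domain (sigma_e <> 0). *)
Definition KKT_Pi_ud w v Vc sigma tau : Prop :=
  (forall e, sigma e != 0) /\
  exists (mu : 'I_n -> R) (kappa : R),
  [/\ (forall e, has_partial (fun s => Pud w v Vc s tau) sigma e (- mu e)) /\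
      is_derive tau (1 : R) (fun t : R => Pud w v Vc sigma t) (- kappa),
      (forall e, 0 <= mu e) /\ 0 <= kappa,
      \sum_(e < n) mu e * sigma e = 0 /\ kappa * tau = 0 &
      (forall e, 0 <= sigma e) /\ 0 <= tau].

End Canonical.

From HB Require Import structures.
From mathcomp Require Import all_boot all_order all_algebra.
From mathcomp Require Import all_classical all_reals all_analysis.
From mathcomp Require Import ring lra.
Import Order.TTheory GRing.Theory Num.Theory.
Import numFieldNormedType.Exports.
Set Implicit Arguments. Unset Strict Implicit. Unset Printing Implicit Defensive.
Local Open Scope ring_scope.

(* For fixed multipliers (sigma, tau) the finite part of Xi is a separable quadratic
   in rho, so when every sigma_e is nonzero stationarity determines
   rho_e = (sigma_e + w_e - tau v_e) / (2 sigma_e); substituting it completes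
   the square and turns the Lagrangian into P_u^d.  The partial derivatives of
   P_u^d at zeta are exactly Lambda(rho), so primal feasibility of rho is dual
   stationarity with multipliers -Lambda(rho), and the two complementarity
   conditions coincide.  Complementarity also kills Lambda(rho)^T zeta, whence
   Xi = -w^T rho = Pi_u. *)

Section RealDerivatives.
Variable R : realType.

Lemma is_derive_unique (f : R -> R) (x v d d' : R) :
  is_derive x v f d -> is_derive x v f d' -> d = d'.
Proof.
by move=> fd fd'; have <- : 'D_v f x = d := derive_val; exact: derive_val.
Qed.

Lemma is_derive_quadratic (a b c x : R) :
  is_derive x 1 (fun t : R => a + b * t + c * t ^+ 2) (b + 2 * c * x).
Proof.
have -> : (fun t : R => a + b * t + c * t ^+ 2) =
    cst a + cst b * id + cst c * id ^+ 2 by apply/funext.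
by apply: is_derive_eq; rewrite /cst /= /GRing.scale /=; ring.
Qed.

Lemma is_derive_sqr_div (p x : R) : x != 0 ->
  is_derive x 1 (fun s : R => (s + p) ^+ 2 / (4 * s))
    ((x + p) / (2 * x) - ((x + p) / (2 * x)) ^+ 2).
Proof.
move=> x0.
have h4x : 4 * x != 0 by rewrite mulf_neq0 // pnatr_eq0.
have dnum : is_derive x 1 (fun s : R => (s + p) ^+ 2) (2 * (x + p)).
  have -> : (fun s : R => (s + p) ^+ 2) = (id + cst p) ^+ 2 by apply/funext.
  by apply: is_derive_eq; rewrite /GRing.scale /= !fctE /=; ring.
have dden : is_derive x 1 (fun s : R => 4 * s) 4.
  have -> : (fun s : R => 4 * s) = cst 4 * id by apply/funext.
  by apply: is_derive_eq; rewrite /GRing.scale /= /cst /=; ring.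
have := is_deriveM dnum (is_deriveV h4x dden).
have -> : (fun s : R => (s + p) ^+ 2) * (fun s => (4 * s)^-1) =
    (fun s : R => (s + p) ^+ 2 / (4 * s)) by apply/funext.
by move/is_derive_eq; apply; rewrite /GRing.scale /=; field.
Qed.

End RealDerivatives.

Section Separable.
Variables (R : realType) (n : nat).

Lemma sumr_upd (F : 'I_n -> R -> R) (x : 'I_n -> R) (i : 'I_n) (s : R) :
  \sum_(e < n) F e (upd x i s e) =
  \sum_(e < n) F e (x e) - F i (x i) + F i (x i + s).
Proof.
rewrite (bigD1 i) // [in RHS](bigD1 i) //= /upd eqxx.
under eq_bigr => e /negbTE -> do rewrite addr0.
by rewrite (addrC (F i (x i))) addrK addrC.
Qed.

Lemma has_partial_separable (F : 'I_n -> R -> R) (c : R) (x : 'I_n -> R)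
    (i : 'I_n) (d : R) :
  is_derive (x i) 1 (F i) d ->
  has_partial (fun y => \sum_(e < n) F e (y e) + c) x i d.
Proof.
move=> dF; rewrite /has_partial.
have -> : (fun s => \sum_(e < n) F e (upd x i s e) + c) =
    cst (\sum_(e < n) F e (x e) - F i (x i) + c) + (F i \o shift (x i)).
  by apply/funext => s; rewrite sumr_upd !fctE /= (addrC s) addrAC.
have dFs : is_derive (0 : R) 1 (F i \o shift (x i)) (d * 1).
  apply: is_derive1_comp; last exact: is_derive_shift.
  by rewrite /shift /= add0r.
by apply: is_derive_eq; rewrite add0r mulr1.
Qed.

End Separable.

Section CanonicalDuality.
Variables (R : realType) (n : nat) (w v : 'I_n -> R) (Vc : R).
Implicit Types (rho sigma : 'I_n -> R) (tau : R).

Definition rho_dual sigma tau : 'I_n -> R :=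
  fun e => (sigma e + w e - tau * v e) / (2 * sigma e).

Lemma Lagr_separable sigma tau :
  Lagr w v Vc sigma tau = fun rho =>
    \sum_(e < n)
      (0 + (tau * v e - w e - sigma e) * rho e + sigma e * rho e ^+ 2)
    + - (tau * Vc).
Proof.
apply/funext => rho; rewrite /Lagr /Lam_nu /Lam_eps /dotw mulrBl mulr_suml.
rewrite addrA -big_split addrAC -sumrB (mulrC Vc).
by congr (_ + _); apply: eq_bigr => e _ /=; ring.
Qed.

Lemma rho_dual_of_stationary sigma tau rho j : sigma j != 0 ->
  has_partial (Lagr w v Vc sigma tau) rho j 0 -> rho j = rho_dual sigma tau j.
Proof.
move=> sj0 stat.
have := has_partial_separable
  (F := fun e r => 0 + (tau * v e - w e - sigma e) * r + sigma e * r ^+ 2)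
  (- (tau * Vc)) (is_derive_quadratic _ _ _ (rho j)).
rewrite -Lagr_separable => /(is_derive_unique stat) crit.
have s2j0 : 2 * sigma j != 0 by rewrite mulf_neq0 // pnatr_eq0.
by apply: (mulIf s2j0); rewrite divfK //; lra.
Qed.

Lemma Lagr_rho_dual sigma tau : (forall e, sigma e != 0) ->
  Lagr w v Vc sigma tau (rho_dual sigma tau) = Pud w v Vc sigma tau.
Proof.
move=> s0; rewrite Lagr_separable /Pud -sumrN.
by congr (_ + _); apply: eq_bigr => e _; rewrite /rho_dual; field; exact: s0.
Qed.

Lemma Pud_separable tau :
  (fun sigma => Pud w v Vc sigma tau) = fun sigma =>
    \sum_(e < n) (- (fun s => (s + (w e - tau * v e)) ^+ 2 / (4 * s))) (sigma e)
    + - (tau * Vc).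
Proof.
apply/funext => sigma; rewrite /Pud -sumrN.
by congr (_ + _); apply: eq_bigr => e _; rewrite !fctE addrA.
Qed.

Lemma has_partial_Pud_sigma sigma tau e : sigma e != 0 ->
  has_partial (fun s => Pud w v Vc s tau) sigma e
    (Lam_eps (rho_dual sigma tau) e).
Proof.
move=> se0; rewrite Pud_separable.
apply: (has_partial_separable (F := fun e => - _)).
apply: is_derive_eq (is_deriveN (is_derive_sqr_div _ se0)) _.
by rewrite /Lam_eps /rho_dual addrA opprB.
Qed.

Lemma is_derive_Pud_tau sigma tau : (forall e, sigma e != 0) ->
  is_derive tau 1 (fun t => Pud w v Vc sigma t)
    (Lam_nu v Vc (rho_dual sigma tau)).
Proof.
move=> s0.
have dterm e : is_derive tau 1
    (fun t => (sigma e + w e - t * v e) ^+ 2 / (4 * sigma e))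
    (- (rho_dual sigma tau e * v e)).
  have -> : (fun t => (sigma e + w e - t * v e) ^+ 2 / (4 * sigma e)) =
      fun t => (sigma e + w e) ^+ 2 / (4 * sigma e)
      + (- ((sigma e + w e) * v e) / (2 * sigma e)) * t
      + (v e ^+ 2 / (4 * sigma e)) * t ^+ 2.
    by apply/funext => t; field; exact: s0.
  apply: is_derive_eq (is_derive_quadratic _ _ _ _) _.
  by rewrite /rho_dual; field; exact: s0.
have -> : (fun t => Pud w v Vc sigma t) =
    - (\sum_(e < n) fun t => (sigma e + w e - t * v e) ^+ 2 / (4 * sigma e))
    - Vc *: id.
  by apply/funext => t; rewrite /Pud !fctE fct_sumE /= mulrC.
apply: is_derive_eq (is_deriveB (is_deriveN (is_derive_sum dterm))
  (is_deriveZ Vc (is_derive_id tau 1))) _.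
by rewrite sumrN opprK /Lam_nu /GRing.scale /= mulr1.
Qed.

Lemma KKT_Pi_ud_rho_dual sigma tau : (forall e, sigma e != 0) ->
  KKT_conds w v Vc (rho_dual sigma tau) sigma tau -> KKT_Pi_ud w v Vc sigma tau.
Proof.
move=> s0 [_ [sigma_ge0 tau_ge0] [csigma ctau] [eps_le0 nu_le0]].
split=> //; exists (fun e => - Lam_eps (rho_dual sigma tau) e),
  (- Lam_nu v Vc (rho_dual sigma tau)); split.
- split=> [e|]; rewrite opprK.
    exact: has_partial_Pud_sigma.
  exact: is_derive_Pud_tau.
- by split=> [e|]; rewrite oppr_ge0.
- split; last by rewrite mulNr mulrC ctau oppr0.
  rewrite (eq_bigr (fun e => - (sigma e * Lam_eps (rho_dual sigma tau) e))).
    by rewrite sumrN csigma oppr0.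
  by move=> e _; rewrite mulNr mulrC.
- by split.
Qed.

Lemma Pi_u_eq_Xi rho sigma tau :
  KKT_conds w v Vc rho sigma tau -> Pi_u w v Vc rho = Xi w v Vc rho sigma tau.
Proof.
move=> [_ [sigma_ge0 tau_ge0] [csigma ctau] [eps_le0 nu_le0]].
have Lagr_dotw : Lagr w v Vc sigma tau rho = - dotw w rho.
  rewrite /Lagr (eq_bigr (fun e => sigma e * Lam_eps rho e)) => [|e _].
    by rewrite csigma mulrC ctau addr0 sub0r.
  exact: mulrC.
by rewrite /Pi_u /Xi Lagr_dotw /Psi /Psi_star !asboolT // sub0e sube0 EFinN.
Qed.

End CanonicalDuality.

Theorem theorem1 (R : realType) (n : nat) (w v : 'I_n -> R) (Vc : R)
  (hn : (0 < n)%N) (hv : forall e, 0 < v e) (hVc : 0 < Vc)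
  (rhob sigmab : 'I_n -> R) (taub : R)
  (hsig : forall e, sigmab e != 0)
  (hKKT : KKT_Xi w v Vc rhob sigmab taub) :
  KKT_Pi_u w v Vc rhob /\ KKT_Pi_ud w v Vc sigmab taub /\
  Pi_u w v Vc rhob = Xi w v Vc rhob sigmab taub /\
  Xi w v Vc rhob sigmab taub = Pi_ud w v Vc sigmab taub.
Proof.
have [stat _ _ _] := hKKT.
have rhobE : rhob = rho_dual w v sigmab taub.
  by apply/funext => j; exact: rho_dual_of_stationary.
split; first by exists sigmab, taub.
split; first by apply: KKT_Pi_ud_rho_dual => //; rewrite -rhobE.
split; first exact: Pi_u_eq_Xi.
by rewrite /Xi /Pi_ud rhobE Lagr_rho_dual.
Qed.
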